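(* Consider a single transmission ($L=1$) over the Rayleigh block-fading Gaussian wiretap channel, with mean SNRs $\gamma_{\textsf{d}}>0$ (legitimate decoder) and $\gamma_{\textsf{e}}>0$ (eavesdropper), and constraints $\xi_{\sf{c}},\xi_{\sf{s}}\in(0,1)$. (i) There exist rates $\textsf{R}\ge0$ and $\textsf{R}_1\ge0$ with $\mathcal{P}_{\sf{co}}\le\xi_{\sf{c}}$ and $\mathcal{P}_{\sf{so}}\le\xi_{\sf{s}}$ if and only if $\xi_{\sf{s}}\ge(1-\xi_{\sf{c}})^{\gamma_{\textsf{d}}/\gamma_{\textsf{e}}}$, equivalently $\xi_{\sf{s}}^{\gamma_{\textsf{e}}}-(1-\xi_{\sf{c}})^{\gamma_{\textsf{d}}}\ge0$. (ii) For a fixed $\textsf{R}\ge0$, there exists $\textsf{R}_1\ge0$ with $\mathcal{P}_{\sf{co}}\le\xi_{\sf{c}}$ and $\mathcal{P}_{\sf{so}}\le\xi_{\sf{s}}$ if and only if $$\textsf{R}\le\log_2\Big(\frac{1-\gamma_{\textsf{d}}\ln(1-\xi_{\sf{c}})}{1-\gamma_{\textsf{e}}\ln(\xi_{\sf{s}})}\Big).$$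
   Context: Channel: $Y=h_{\textsf{d}}X+N_{\textsf{d}}$, $Z=h_{\textsf{e}}X+N_{\textsf{e}}$ with unit-variance Gaussian noises and input power $1$. $\textsf{SNR}_{\textsf{d}}=|h_{\textsf{d}}|^2$ and $\textsf{SNR}_{\textsf{e}}=|h_{\textsf{e}}|^2$ are independent exponential random variables with means $\gamma_{\textsf{d}}$ and $\gamma_{\textsf{e}}$ (CDF $1-e^{-x/\gamma}$ for $x\ge0$). Mutual informations: $I(X;Y)=\log_2(1+\textsf{SNR}_{\textsf{d}})$, $I(X;Z)=\log_2(1+\textsf{SNR}_{\textsf{e}})$. With secrecy rate $\textsf{R}$ and dummy-message rate $\textsf{R}_1$, the connection outage probability is $\mathcal{P}_{\sf{co}}=\mathcal{P}(\textsf{R}+\textsf{R}_1>\log_2(1+\textsf{SNR}_{\textsf{d}}))$ and the secrecy outage probability is $\mathcal{P}_{\sf{so}}=\mathcal{P}(\textsf{R}_1<\log_2(1+\textsf{SNR}_{\textsf{e}}))$. *)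

From HB Require Import structures.
From mathcomp Require Import all_boot all_order all_algebra.
From mathcomp Require Import all_classical all_reals all_analysis.
Set Implicit Arguments. Unset Strict Implicit. Unset Printing Implicit Defensive.
Import Order.TTheory GRing.Theory Num.Theory.
Local Open Scope classical_set_scope.
Local Open Scope ring_scope.

Definition log2 {R : realType} (x : R) : R := ln x / ln 2.

Definition expo_cdf {R : realType} (gamma x : R) : R :=
  if 0 <= x then 1 - expR (- x / gamma) else 0.

Definition is_exponential {R : realType} {d} {T : measurableType d}
  (P : probability T R) (X : T -> R) (gamma : R) : Prop :=
  forall x : R, P [set w | X w <= x] = (expo_cdf gamma x)%:E.

Definition P_co {R : realType} {d} {T : measurableType d}
  (P : probability T R) (SNRd : T -> R) (Rs R1 : R) : \bar R :=
  P [set w | log2 (1 + SNRd w) < Rs + R1].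

Definition P_so {R : realType} {d} {T : measurableType d}
  (P : probability T R) (SNRe : T -> R) (R1 : R) : \bar R :=
  P [set w | R1 < log2 (1 + SNRe w)].

From HB Require Import structures.
From mathcomp Require Import all_boot all_order all_algebra.
From mathcomp Require Import all_classical all_reals all_analysis.
From mathcomp Require Import measurable_realfun lra.

Set Implicit Arguments.
Unset Strict Implicit.
Unset Printing Implicit Defensive.
Import Order.TTheory GRing.Theory Num.Theory.
Local Open Scope classical_set_scope.
Local Open Scope ring_scope.

(* With thresholds A := - gd ln (1 - xic) and B := - ge ln xis, the tail
   formulas of the exponential law turn the two outage constraints into
   [R + R1 <= log2 (1 + A)] and [log2 (1 + B) <= R1].  Both statements are
   then linear arithmetic in [R] and [R1]: a feasible pair exists iff
   [log2 (1 + B) <= log2 (1 + A)], i.e. [B <= A], and for a given [R] some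
   [R1] fits iff [R <= log2 (1 + A) - log2 (1 + B)]. *)

Section log2.
Variable R : realType.
Implicit Types x y s : R.

Lemma ln2_gt0 : 0 < ln (2 : R).
Proof. by rewrite ln_gt0 // ltr1n. Qed.

Lemma log2_powR s : log2 (2 `^ s) = s.
Proof. by rewrite /log2 ln_powR mulfK // gt_eqF // ln2_gt0. Qed.

Lemma log2_le0 x : x <= 0 -> log2 x = 0.
Proof. by move=> x_le0; rewrite /log2 ln0 // mul0r. Qed.

Lemma ler_log2 : {in Num.pos &, {mono @log2 R : x y / x <= y}}.
Proof. by move=> x y x0 y0; rewrite /log2 ler_pM2r ?invr_gt0 ?ln2_gt0 // ler_ln. Qed.

Lemma ltr_log2 : {in Num.pos &, {mono @log2 R : x y / x < y}}.
Proof. by move=> x y x0 y0; rewrite /log2 ltr_pM2r ?invr_gt0 ?ln2_gt0 // ltr_ln. Qed.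

Lemma log2_div : {in Num.pos &, {morph @log2 R : x y / x / y >-> x - y}}.
Proof. by move=> x y x0 y0; rewrite /log2 ln_div // mulrBl. Qed.

Lemma log2_ge0 x : 1 <= x -> 0 <= log2 x.
Proof. by move=> x_ge1; rewrite divr_ge0 ?ln_ge0 // ler1n. Qed.

Lemma powR2_gt0 s : 0 < 2 `^ s :> R.
Proof. exact: powR_gt0 (ltr0Sn R 1). Qed.

Lemma powR2_ge1 s : 0 <= s -> 1 <= 2 `^ s :> R.
Proof. by move=> s0; rewrite -[X in X <= _](powRr0 2); apply: ler_powR; rewrite ?ler1n. Qed.

Lemma ler_powR_log2 s y : 0 < y -> (2 `^ s <= y) = (s <= log2 y).
Proof. by move=> y0; rewrite -[s in RHS]log2_powR ler_log2 ?posrE ?powR_gt0. Qed.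

Lemma ler_log2_powR s y : 0 < y -> (log2 y <= s) = (y <= 2 `^ s).
Proof. by move=> y0; rewrite -[s in LHS]log2_powR ler_log2 ?posrE ?powR_gt0. Qed.

Lemma ltr_powR_log2 s y : 0 < y -> (2 `^ s < y) = (s < log2 y).
Proof. by move=> y0; rewrite -[s in RHS]log2_powR ltr_log2 ?posrE ?powR_gt0. Qed.

Lemma ltr_log2_powR s y : 0 < y -> (log2 y < s) = (y < 2 `^ s).
Proof. by move=> y0; rewrite -[s in LHS]log2_powR ltr_log2 ?posrE ?powR_gt0. Qed.

Lemma measurable_log2 : measurable_fun setT (@log2 R).
Proof.
have -> : @log2 R = (fun x => x * (ln 2)^-1) \o @ln R by [].
by apply: measurableT_comp; [exact: mulrr_measurable | exact: measurable_ln].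
Qed.

End log2.

Lemma powR_le_ln (R : realType) (u v p : R) :
  0 < u -> 0 < v -> (u `^ p <= v) = (p * ln u <= ln v).
Proof. by move=> u0 v0; rewrite -[LHS]ler_ln ?posrE ?powR_gt0 // ln_powR. Qed.

Section measurable_sets.
Context d (T : measurableType d) (R : realType) (f h : T -> R).
Hypotheses (mf : measurable_fun setT f) (mh : measurable_fun setT h).

Lemma measurable_ltr_set : measurable [set w | f w < h w].
Proof.
by rewrite -[X in measurable X]setTI; exact: measurable_fun_ltr mf mh measurableT [set true] _.
Qed.

Lemma measurable_ler_set : measurable [set w | f w <= h w].
Proof.
by rewrite -[X in measurable X]setTI; exact: measurable_fun_ler mf mh measurableT [set true] _.
Qed.

End measurable_sets.

Lemma le_measureU0 d (T : measurableType d) (R : realType)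
    (mu : {measure set T -> \bar R}) (A B N : set T) :
  measurable A -> measurable B -> measurable N -> mu N = 0%E ->
  A `<=` B `|` N -> (mu A <= mu B)%E.
Proof.
move=> mA mB mN N0 AB; rewrite -(measureU0 mB mN N0).
by apply: le_measure; rewrite ?inE //; exact: measurableU.
Qed.

Lemma expo_cdf_le (R : realType) (g x t : R) : 0 < g -> 0 < x < 1 ->
  (expo_cdf g t <= x) = (t <= - (g * ln (1 - x))).
Proof.
move=> g0 /andP[x0 x1]; have x01 : 0 < 1 - x < 1 by apply/andP; split; lra.
have A0 : g * ln (1 - x) < 0 by rewrite pmulr_rlt0 // ln_lt0.
rewrite /expo_cdf; case: ifPn => [t0 | ]; last by rewrite -ltNge; lra.
have -> : (1 - expR (- t / g) <= x) = (ln (1 - x) <= - t / g).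
  by rewrite -[RHS]ler_expR lnK ?posrE; [apply/idP/idP; lra | lra].
by rewrite ler_pdivlMr //; apply/idP/idP; lra.
Qed.

Section exponential_snr.
Context d (T : measurableType d) (R : realType) (P : probability T R).
Variables (X : {RV P >-> R}) (g : R).
Hypotheses (g_gt0 : 0 < g) (X_exp : is_exponential P X g).

Let mX : measurable_fun setT X := measurable_funPT X.

Let mX_le t : measurable [set w | X w <= t].
Proof. exact: measurable_ler_set mX (measurable_cst t). Qed.

Let mX_lt t : measurable [set w | X w < t].
Proof. exact: measurable_ltr_set mX (measurable_cst t). Qed.

Let mlog2_lt s : measurable [set w | log2 (1 + X w) < s].
Proof.
apply: measurable_ltr_set (measurable_cst s).
by apply: (measurableT_comp (f := @log2 R)); [exact: measurable_log2 | exact: measurable_funD].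
Qed.

Lemma exponential_le_lt0 t : t < 0 -> P [set w | X w <= t] = 0%E.
Proof. by move=> t0; rewrite X_exp /expo_cdf lt_geF. Qed.

Lemma exponential_lt_le x t : 0 < x < 1 ->
  (P [set w | (X w < t)%R] <= x%:E)%E <-> t <= - (g * ln (1 - x)).
Proof.
move=> x01; split => [Pt | tA].
- rewrite leNgt; apply/negP => At.
  pose a := (- (g * ln (1 - x)) + t) / 2.
  have a_lt : a < t by rewrite /a; lra.
  have : a <= - (g * ln (1 - x)).
    rewrite -expo_cdf_le // -lee_fin -X_exp; apply: le_trans Pt.
    apply: le_measure; rewrite ?inE //.
    by move=> w /= Xa; exact: le_lt_trans Xa a_lt.
  by rewrite /a; lra.
- apply: (@le_trans _ _ (P [set w | X w <= t])).
    by apply: le_measure; rewrite ?inE // => w /=; exact: ltW.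
  by rewrite X_exp lee_fin expo_cdf_le.
Qed.

Lemma exponential_gt_le x t : 0 < x < 1 -> 0 <= t ->
  (P [set w | (t < X w)%R] <= x%:E)%E <-> - (g * ln x) <= t.
Proof.
move=> /andP[x0 x1] t0.
have -> : [set w | t < X w] = ~` [set w | X w <= t].
  by apply/seteqP; split => w /=; rewrite ltNge => /negP.
rewrite probability_setC // X_exp /expo_cdf t0 -EFinB lee_fin subKr.
rewrite -[_ <= x]ler_ln ?posrE ?expR_gt0 // expRK ler_pdivrMr //.
by split => ?; lra.
Qed.

(* [ln] is [0] on nonpositive arguments, so the two events may differ on
   [X <= -1]; that event is null. *)
Lemma measure_log2_1D_lt s :
  P [set w | log2 (1 + X w) < s] = P [set w | X w < 2 `^ s - 1].
Proof.
have two_s := @powR2_gt0 R s.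
apply/le_anti/andP; split.
- apply: le_measure; rewrite ?inE //.
  move=> w /=; have [Xw _|Xw] := lerP (1 + X w) 0; first lra.
  by rewrite ltr_log2_powR //; lra.
- apply: (le_measureU0 (mX_lt _) (mlog2_lt s) (mX_le (-1))).
    exact: exponential_le_lt0 (ltrN10 R).
  move=> w /= Xw; have [|Xw1] := lerP (X w) (-1); [by right | left].
  by rewrite ltr_log2_powR; lra.
Qed.

Lemma connection_outage_le x Rs R1 : 0 < x < 1 ->
  (P_co P X Rs R1 <= x%:E)%E <-> Rs + R1 <= log2 (1 - g * ln (1 - x)).
Proof.
move=> x01; have A0 : g * ln (1 - x) < 0.
  by rewrite pmulr_rlt0 // ln_lt0 //; case/andP: x01 => *; apply/andP; split; lra.
rewrite /P_co measure_log2_1D_lt exponential_lt_le // -ler_powR_log2; last lra.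
by split => ?; lra.
Qed.

Lemma secrecy_outage_le x R1 : 0 < x < 1 -> 0 <= R1 ->
  (P_so P X R1 <= x%:E)%E <-> log2 (1 - g * ln x) <= R1.
Proof.
move=> x01 R10; have B0 : g * ln x < 0 by rewrite pmulr_rlt0 // ln_lt0.
have two_R1 := powR2_ge1 R10.
have -> : P_so P X R1 = P [set w | 2 `^ R1 - 1 < X w].
  rewrite /P_so; congr (P _); apply/seteqP.
  split => w /=; have [Xw|Xw] := lerP (1 + X w) 0; try lra.
  - by rewrite log2_le0 //; lra.
  - by rewrite -ltr_powR_log2 //; lra.
  - by rewrite -ltr_powR_log2 //; lra.
rewrite exponential_gt_le // ?subr_ge0 // ler_log2_powR; last lra.
by split => ?; lra.
Qed.

End exponential_snr.

Theorem theorem2 (R : realType) (d : measure_display) (T : measurableType d)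
  (P : probability T R) (SNRd SNRe : {RV P >-> R})
  (gd ge xic xis : R)
  (hgd : 0 < gd) (hge : 0 < ge)
  (hxic0 : 0 < xic) (hxic1 : xic < 1) (hxis0 : 0 < xis) (hxis1 : xis < 1)
  (hd : is_exponential P SNRd gd) (he : is_exponential P SNRe ge) :
  ((exists Rs R1 : R, [/\ 0 <= Rs, 0 <= R1,
        (P_co P SNRd Rs R1 <= xic%:E)%E & (P_so P SNRe R1 <= xis%:E)%E])
     <-> (1 - xic) `^ (gd / ge) <= xis)
  /\ ((1 - xic) `^ (gd / ge) <= xis <-> 0 <= xis `^ ge - (1 - xic) `^ gd)
  /\ (forall Rs : R, 0 <= Rs ->
        ((exists R1 : R, [/\ 0 <= R1,
            (P_co P SNRd Rs R1 <= xic%:E)%E & (P_so P SNRe R1 <= xis%:E)%E])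
         <-> Rs <= log2 ((1 - gd * ln (1 - xic)) / (1 - ge * ln xis)))).
Proof.
have xic01 : 0 < xic < 1 by apply/andP.
have xis01 : 0 < xis < 1 by apply/andP.
have c0 : gd * ln (1 - xic) < 0 by rewrite pmulr_rlt0 // ln_lt0 //; apply/andP; split; lra.
have e0 : ge * ln xis < 0 by rewrite pmulr_rlt0 // ln_lt0.
set a := log2 (1 - gd * ln (1 - xic)).
set b := log2 (1 - ge * ln xis).
have co Rs R1 : (P_co P SNRd Rs R1 <= xic%:E)%E <-> Rs + R1 <= a.
  exact: connection_outage_le.
have so R1 : 0 <= R1 -> (P_so P SNRe R1 <= xis%:E)%E <-> b <= R1.
  exact: secrecy_outage_le.
have b0 : 0 <= b by rewrite log2_ge0 //; lra.
have ba : (b <= a) = (gd * ln (1 - xic) <= ge * ln xis).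
  by rewrite ler_log2 ?posrE; [apply/idP/idP; lra | lra | lra].
have pow : ((1 - xic) `^ (gd / ge) <= xis) = (gd * ln (1 - xic) <= ge * ln xis).
  by rewrite powR_le_ln ?subr_gt0 // mulrAC ler_pdivrMr // [ln xis * _]mulrC.
split; [|split].
- rewrite pow -ba; split => [[Rs [R1 [Rs0 R10 /co ? /(so _ R10) ?]]] | ba_le]; first lra.
  by exists 0, b; split; rewrite ?co ?so // add0r.
- by rewrite pow subr_ge0 powR_le_ln ?ln_powR ?powR_gt0 ?subr_gt0.
- move=> Rs Rs0; rewrite log2_div ?posrE -/a -/b; [|lra|lra].
  split => [[R1 [R10 /co ? /(so _ R10) ?]] | Rs_le]; first lra.
  by exists b; split; rewrite ?co ?so //; lra.
Qed.
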